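(* Let $\mathfrak g$ be a real nilpotent Lie algebra with a metric $\langle,\rangle$ satisfying $\operatorname{Ric}=\lambda\,\mathrm{id}$ with $\lambda\neq0$, and let $\psi$ be a derivation of $\mathfrak g$, self-adjoint with respect to $\langle,\rangle$, with $\operatorname{Tr}\psi^2\neq0$. Let $\tilde{\mathfrak g}=\mathfrak g\rtimes_\psi\operatorname{Span}\{e_0\}$ be the semidirect product with $[e_0,v]=\psi(v)$ for $v\in\mathfrak g$, and let $\widetilde{\langle,\rangle}=\langle,\rangle-\frac1\lambda(\operatorname{Tr}\psi^2)\,e^0\otimes e^0$, where $e^0$ vanishes on $\mathfrak g$ and $e^0(e_0)=1$. Then $\widetilde{\langle,\rangle}$ satisfies $\widetilde{\operatorname{Ric}}=\lambda\,\mathrm{id}$ and $\tilde{\mathfrak g}=\mathfrak g\oplus^\perp\operatorname{Span}\{e_0\}$ is a pseudo-Iwasawa decomposition.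
   Context: A metric on a Lie algebra is a nondegenerate symmetric bilinear form, possibly indefinite; Ricci operators are those of the corresponding left-invariant pseudo-Riemannian metrics on simply connected Lie groups. A pseudo-Iwasawa decomposition of a metric Lie algebra $\tilde{\mathfrak g}$ is an orthogonal direct sum of vector spaces $\tilde{\mathfrak g}=\mathfrak g\oplus^\perp\mathfrak a$ with $\mathfrak g$ a nilpotent ideal, $\mathfrak a$ an abelian subalgebra, and $\operatorname{ad}X$ self-adjoint for every $X\in\mathfrak a$. *)

(* A finite-dimensional real Lie algebra is modelled on the
   coordinate space 'rV[R]_N (R : realType), with a bracket given as a
   function on row vectors; a metric is a symmetric invertible Gram matrix. *)
From HB Require Import structures.
From mathcomp Require Import all_boot all_order all_algebra.
From mathcomp Require Import reals.
Set Implicit Arguments. Unset Strict Implicit. Unset Printing Implicit Defensive.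
Import Order.TTheory GRing.Theory Num.Theory.
Local Open Scope ring_scope.

Section MetricLie.
Variables (R : realType) (N : nat).
Notation V := 'rV[R]_N.

(* Lie algebra axioms: bilinear (linearity in the first slot + antisymmetry),
   antisymmetric, Jacobi identity *)
Definition is_lie (br : V -> V -> V) : Prop :=
  [/\ (forall (a : R) (x y z : V), br (a *: x + y) z = a *: br x z + br y z),
      (forall x y : V, br x y = - br y x) &
      (forall x y z : V, br x (br y z) + br y (br z x) + br z (br x y) = 0)].

Definition iter_br (br : V -> V -> V) (xs : seq V) (y : V) : V :=
  foldr (fun x acc => br x acc) y xs.

(* nilpotent: the lower central series reaches 0, i.e. all brackets of
   length k+1 vanish for some k *)
Definition lie_nilpotent (br : V -> V -> V) : Prop :=
  exists k : nat, forall (xs : seq V) (y : V), size xs = k -> iter_br br xs y = 0.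

Definition is_metric (G : 'M[R]_N) : Prop := G^T = G /\ G \in unitmx.

Definition ip (G : 'M[R]_N) (u v : V) : R := (u *m G *m v^T) 0 0.

Definition ebasis (j : 'I_N) : V := delta_mx 0 j.

(* Levi-Civita connection of the left-invariant metric, via Koszul:
   2 <nabla_x y, z> = <[x,y],z> - <[y,z],x> + <[z,x],y> *)
Definition lc_nabla (br : V -> V -> V) (G : 'M[R]_N) (x y : V) : V :=
  (2%:R)^-1 *: ((\row_j (ip G (br x y) (ebasis j) - ip G (br y (ebasis j)) x
                        + ip G (br (ebasis j) x) y)) *m invmx G).

Definition curv (br : V -> V -> V) (G : 'M[R]_N) (x y z : V) : V :=
  lc_nabla br G x (lc_nabla br G y z) - lc_nabla br G y (lc_nabla br G x z)
  - lc_nabla br G (br x y) z.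

Definition ric (br : V -> V -> V) (G : 'M[R]_N) (y z : V) : R :=
  \sum_(i < N) (curv br G (ebasis i) y z) 0 i.

(* Ricci operator (acting on row vectors on the right): <y Ric, z> = ric(y,z) *)
Definition ricci_op (br : V -> V -> V) (G : 'M[R]_N) : 'M[R]_N :=
  (\matrix_(i, j) ric br G (ebasis i) (ebasis j)) *m invmx G.

(* derivation psi : v |-> v *m P *)
Definition is_derivation (br : V -> V -> V) (P : 'M[R]_N) : Prop :=
  forall x y : V, br x y *m P = br (x *m P) y + br x (y *m P).

Definition self_adjoint (G : 'M[R]_N) (P : 'M[R]_N) : Prop :=
  forall u v : V, ip G (u *m P) v = ip G u (v *m P).

(* Pseudo-Iwasawa decomposition  V = g (+)^perp a  where g, a are the row
   spaces of the matrices Mg, Ma *)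
Definition pseudo_iwasawa (br : V -> V -> V) (G : 'M[R]_N)
    (m k : nat) (Mg : 'M[R]_(m, N)) (Ma : 'M[R]_(k, N)) : Prop :=
  [/\ (Mg + Ma == (1%:M : 'M[R]_N))%MS && (Mg :&: Ma == (0 : 'M[R]_N))%MS,
      (forall u v : V, (u <= Mg)%MS -> (v <= Ma)%MS -> ip G u v = 0) /\
      (forall x y : V, (x <= Mg)%MS -> (br y x <= Mg)%MS) /\
      (exists k0 : nat, forall (xs : seq V) (y : V),
          all (fun x => (x <= Mg)%MS) xs -> (y <= Mg)%MS ->
          size xs = k0 -> iter_br br xs y = 0),
      (forall x y : V, (x <= Ma)%MS -> (y <= Ma)%MS -> br x y = 0) &
      (forall x : V, (x <= Ma)%MS ->
          forall u v : V, ip G (br x u) v = ip G u (br x v))].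

End MetricLie.

(* Semidirect product g x|_psi Span{e_0} on 'rV_(n + 1): the last coordinate
   is the e_0-coefficient; [e_0, v] = v *m P for v in g. *)
Section Semidirect.
Variables (R : realType) (n : nat).

Definition sd_br (br : 'rV[R]_n -> 'rV[R]_n -> 'rV[R]_n) (P : 'M[R]_n)
    (x y : 'rV[R]_(n + 1)) : 'rV[R]_(n + 1) :=
  row_mx (br (lsubmx x) (lsubmx y) + (rsubmx x) 0 0 *: (lsubmx y *m P)
          - (rsubmx y) 0 0 *: (lsubmx x *m P)) (0 : 'rV[R]_1).

Definition sd_metric (G : 'M[R]_n) (lambda : R) (P : 'M[R]_n) : 'M[R]_(n + 1) :=
  block_mx G 0 0 (- (lambda^-1 * \tr (P *m P)))%:M.

Definition sd_g : 'M[R]_(n, n + 1) := row_mx 1%:M 0.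
Definition sd_a : 'M[R]_(1, n + 1) := row_mx 0 1%:M.

End Semidirect.

From Pilot Require Import Defs.
From HB Require Import structures.
From mathcomp Require Import all_boot all_order all_algebra.
From mathcomp Require Import reals.
From mathcomp Require Import ring lra.
Set Implicit Arguments. Unset Strict Implicit. Unset Printing Implicit Defensive.
Import Order.TTheory GRing.Theory Num.Theory.
Local Open Scope ring_scope.

(* On a nilpotent metric Lie algebra the operators ad_w, ad_y ad_z and
   P ad_u (P a derivation) lower the upper central series, hence are nilpotent and
   traceless.  The general formula
     ric(y,z) = - tr ad(nabla_y z) - 1/4 tr(j_y j_z) - 1/2 tr(ad_y ad_z) - 1/2 tr(ad_y ad_z^* ),
   where j_y x = (ad_x)^* y, thus reduces to ric(y,z) = - 1/4 tr(j_y j_z) - 1/2 tr(ad_y ad_z^* ),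
   and summing it against a self-adjoint derivation gives tr(Ric P) = 0; in the Einstein case
   lambda tr P = 0, so tr P = 0.
   On g x|_P Span{e_0}, ad_(v + t e_0) is block triangular with diagonal blocks ad_v + t P and 0,
   and the adjoint and j-operators have explicit block forms.  In the Ricci formula the terms
   coming from <v P, w P> cancel, tr P = 0 kills the first trace, and the e_0 e_0 coefficient
   is - tr(P^2) t s, which the choice <e_0, e_0> = - tr(P^2) / lambda turns into lambda <,>. *)

Lemma mxtrace_nilpotent (F : fieldType) n (A : 'M[F]_n) k : A ^+ k = 0 -> \tr A = 0.
Proof.
case: n A => [|n] A Ak; first by rewrite /mxtrace big_ord0.
have charX : char_poly A %| 'X ^+ (k * n.+1).
  pose X : 'M[{poly F}]_n.+1 := 'X%:M.
  have Apk : map_mx polyC A ^+ k = 0 by rewrite -rmorphXn /= Ak map_mx0.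
  have XAk : X ^+ k - map_mx polyC A ^+ k = X ^+ k by rewrite Apk subr0.
  have -> : 'X ^+ (k * n.+1) = \det (X ^+ k) by rewrite -rmorphXn /= det_scalar exprM.
  rewrite -XAk subrXX_comm; last exact: comm_scalar_mx.
  by rewrite det_mulmx dvdp_mulr.
have : char_poly A %| ('X - 0%:P) ^+ (k * n.+1) by rewrite subr0.
case/dvdp_exp_XsubCP => j _; rewrite subr0.
rewrite eqp_monic ?char_poly_monic ?monicXn // => /eqP charE.
have := size_char_poly A; rewrite charE size_polyXn => -[j_eq]; subst j.
have := char_poly_trace A (ltn0Sn n).
by rewrite charE coefXn eqn_leq ltnn andbF => /esym/eqP; rewrite oppr_eq0 => /eqP.
Qed.

Lemma mxtraceN (R : pzRingType) n (A : 'M[R]_n) : \tr (- A) = - \tr A.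
Proof. exact: raddfN. Qed.

Lemma mul_rV_lin1_fun (R : pzRingType) m n (f : 'rV[R]_m -> 'rV[R]_n) :
  linear f -> forall u, u *m lin1_mx f = f u.
Proof.
move=> f_lin u.
exact: (mul_rV_lin1 (HB.pack f (GRing.isLinear.Build _ _ _ _ f f_lin))).
Qed.

Lemma scalar_rV_expand (R : pzRingType) n (g : 'rV[R]_n -> R) :
  scalar g -> forall x, g x = \sum_i x 0 i * g (delta_mx 0 i).
Proof.
move=> g_lin x.
pose gL : {scalar 'rV[R]_n} := HB.pack g (GRing.isLinear.Build _ _ _ _ g g_lin).
transitivity (gL x); first by [].
by rewrite {1}(row_sum_delta x) linear_sum; apply: eq_bigr => i _; rewrite linearZ.
Qed.

Lemma mx11_mul (R : pzRingType) k (s : 'rV[R]_1) (M : 'M[R]_(1, k)) : s *m M = s 0 0 *: M.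
Proof. by rewrite {1}[s]mx11_scalar mul_scalar_mx. Qed.

Lemma trmx11 (R : pzRingType) (M : 'M[R]_1) : M^T = M.
Proof. by rewrite [M]mx11_scalar tr_scalar_mx. Qed.

Lemma mxtrace11 (R : pzRingType) (M : 'M[R]_1) : \tr M = M 0 0.
Proof. by rewrite /mxtrace big_ord1. Qed.

Lemma mx_rV_eqP (R : pzRingType) n (A B : 'M[R]_n) :
  (forall x : 'rV_n, x *m A = x *m B) -> A = B.
Proof. by move=> AB; apply/row_matrixP => i; rewrite !rowE AB. Qed.

Lemma ebasisM (R : realType) n (M : 'M[R]_n) i j : (@ebasis R n i *m M) 0 j = M i j.
Proof. by rewrite /ebasis -rowE mxE. Qed.

Lemma ebasis_trM (R : realType) n (u : 'rV[R]_n) i : (u *m (@ebasis R n i)^T) 0 0 = u 0 i.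
Proof. by rewrite /ebasis trmx_delta -colE mxE. Qed.

Section Metric.
Variables (R : realType) (N : nat) (G : 'M[R]_N).
Local Notation V := 'rV[R]_N.
Local Notation e := (@ebasis R N).
Local Notation ip := (ip G).
Local Notation Gi := (invmx G).

Fact ip_is_linear u : scalar (ip u).
Proof. by move=> a v w; rewrite /Defs.ip linearP /= mulmxDr -scalemxAr !mxE. Qed.
HB.instance Definition _ u := GRing.isLinear.Build R V R *%R (ip u) (ip_is_linear u).

Definition adjmx (M : 'M[R]_N) : 'M[R]_N := G *m M^T *m Gi.

Fact adjmx_is_linear : linear adjmx.
Proof. by move=> a A B; rewrite /adjmx linearP /= mulmxDr mulmxDl -scalemxAr -scalemxAl. Qed.
HB.instance Definition _ := GRing.isLinear.Build R 'M[R]_N 'M[R]_N *:%R adjmx adjmx_is_linear.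

Definition form_mx (f : V -> V -> R) : 'M[R]_N := \matrix_(i, j) f (e i) (e j).

Lemma bilinear_formE (f : V -> V -> R) :
  (forall z, scalar (f^~ z)) -> (forall y, scalar (f y)) ->
  forall y z, f y z = (y *m form_mx f *m z^T) 0 0.
Proof.
move=> lin_l lin_r y z; rewrite (scalar_rV_expand (lin_l z)) !mxE.
under eq_bigr do rewrite (scalar_rV_expand (lin_r _)) mulr_sumr.
rewrite exchange_big; apply: eq_bigr => j _; rewrite !mxE mulr_suml.
by apply: eq_bigr => i _; rewrite !mxE; ring.
Qed.

Lemma sum_bilinear_ebasis (f : V -> V -> R) (A B : 'M[R]_N) :
  (forall z, scalar (f^~ z)) -> (forall y, scalar (f y)) ->
  \sum_i f (e i *m A) (e i *m B) = \tr (A *m form_mx f *m B^T).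
Proof.
move=> lin_l lin_r; apply: eq_bigr => i _; rewrite bilinear_formE //.
have -> : e i *m A *m form_mx f *m (e i *m B)^T =
          e i *m (A *m form_mx f *m B^T) *m (e i)^T by rewrite trmx_mul !mulmxA.
by rewrite ebasis_trM ebasisM.
Qed.

Section NonDegenerate.
Hypotheses (G_sym : G^T = G) (G_unit : G \in unitmx).

Lemma invmx_sym : Gi^T = Gi.
Proof. by rewrite trmx_inv G_sym. Qed.

Lemma ipC u v : ip u v = ip v u.
Proof.
have trmx11 (A : 'M[R]_1) : A 0 0 = A^T 0 0 by rewrite mxE.
by rewrite /Defs.ip trmx11 !trmx_mul G_sym trmxK mulmxA.
Qed.

Lemma ipDl u v w : ip (u + v) w = ip u w + ip v w.
Proof. by rewrite ipC linearD /= !(ipC w). Qed.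

Lemma ipNl u w : ip (- u) w = - ip u w.
Proof. by rewrite ipC linearN /= ipC. Qed.

Lemma ipZl a u w : ip (a *: u) w = a * ip u w.
Proof. by rewrite ipC linearZ /= ipC. Qed.

Lemma ip_ebasis v j : ip v (e j) = (v *m G) 0 j.
Proof. by rewrite /Defs.ip ebasis_trM. Qed.

Lemma ip_dual v j : ip v (e j *m Gi) = v 0 j.
Proof. by rewrite /Defs.ip trmx_mul invmx_sym mulmxA mulmxK // ebasis_trM. Qed.

Lemma ip_nondeg u v : (forall w, ip u w = ip v w) -> u = v.
Proof.
move=> uv; have : u *m G = v *m G by apply/rowP => j; rewrite -!ip_ebasis.
by move/(congr1 (mulmx^~ Gi)); rewrite !mulmxK.
Qed.

Lemma ip_adjmx u M v : ip (u *m adjmx M) v = ip u (v *m M).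
Proof. by rewrite /Defs.ip /adjmx trmx_mul !mulmxA mulmxKV. Qed.

Lemma adjmxK : involutive adjmx.
Proof.
move=> M; rewrite /adjmx !trmx_mul trmxK invmx_sym G_sym !mulmxA mulmxV //.
by rewrite mul1mx mulmxK.
Qed.

Lemma adjmxM M1 M2 : adjmx (M1 *m M2) = adjmx M2 *m adjmx M1.
Proof. by rewrite /adjmx trmx_mul !mulmxA mulmxKV. Qed.

Lemma mxtrace_adjmx M : \tr (adjmx M) = \tr M.
Proof. by rewrite /adjmx mxtrace_mulC mulmxA mulVmx // mul1mx mxtrace_tr. Qed.

Lemma adjmx_self_adjoint P : self_adjoint G P -> adjmx P = P.
Proof.
by move=> P_sa; apply: mx_rV_eqP => u; apply: ip_nondeg => w; rewrite ip_adjmx P_sa.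
Qed.

Lemma mxtrace_dual M : \tr M = \sum_i ip (e i *m M) (e i *m Gi).
Proof. by apply: eq_bigr => i _; rewrite ip_dual ebasisM. Qed.

Lemma sum_ip_dual u v : \sum_k ip (e k) u * ip (e k *m Gi) v = ip u v.
Proof.
transitivity ((u *m G *m v^T) 0 0); last by [].
rewrite mxE; apply: eq_bigr => k _.
by rewrite ipC ip_ebasis ipC ip_dual [v^T _ _]mxE.
Qed.

Section DualSums.
Variable f : V -> V -> R.
Hypotheses (f_lin_l : forall z, scalar (f^~ z)) (f_lin_r : forall y, scalar (f y)).

Lemma sum_dual_swap : \sum_i f (e i) (e i *m Gi) = \sum_i f (e i *m Gi) (e i).
Proof.
transitivity (\sum_i f (e i *m 1%:M) (e i *m Gi)); first by under [RHS]eq_bigr do rewrite mulmx1.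
transitivity (\sum_i f (e i *m Gi) (e i *m 1%:M)); last by under eq_bigr do rewrite mulmx1.
by rewrite !sum_bilinear_ebasis // mul1mx trmx1 mulmx1 invmx_sym mxtrace_mulC.
Qed.

Lemma sum_dual_adjmx A :
  \sum_i f (e i *m A) (e i *m Gi) = \sum_i f (e i) (e i *m Gi *m adjmx A).
Proof.
have GiA : Gi *m adjmx A = A^T *m Gi by rewrite /adjmx !mulmxA mulVmx // mul1mx.
transitivity (\sum_i f (e i *m 1%:M) (e i *m (Gi *m adjmx A))); last first.
  by apply: eq_bigr => i _; rewrite mulmx1 mulmxA.
rewrite !sum_bilinear_ebasis // mul1mx GiA trmx_mul trmxK invmx_sym.
by rewrite mulmxA [RHS]mxtrace_mulC mulmxA.
Qed.

End DualSums.

Section LieBracket.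
Variable br : V -> V -> V.
Hypotheses (br_linear : forall z, linear (br^~ z)) (br_anti : forall x y, br x y = - br y x).

Lemma br_linear_r x : linear (br x).
Proof.
move=> a y z; rewrite br_anti br_linear (br_anti x y) (br_anti x z).
by rewrite scalerN opprD.
Qed.

Definition ad x : 'M[R]_N := lin1_mx (br x).

Lemma mul_ad x y : y *m ad x = br x y.
Proof. exact/mul_rV_lin1_fun/br_linear_r. Qed.

Fact ad_is_linear : linear ad.
Proof. by move=> a x y; apply/matrixP => i j; rewrite !mxE br_linear !mxE. Qed.
HB.instance Definition _ := GRing.isLinear.Build R V 'M[R]_N *:%R ad ad_is_linear.

Definition jmx y : 'M[R]_N := lin1_mx (fun x => y *m adjmx (ad x)).

Lemma mul_jmx x y : x *m jmx y = y *m adjmx (ad x).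
Proof. by apply: mul_rV_lin1_fun => a u v; rewrite !linearP. Qed.

Fact jmx_is_linear : linear jmx.
Proof.
move=> a x y; apply: mx_rV_eqP => u.
by rewrite mulmxDr -scalemxAr !mul_jmx mulmxDl -scalemxAl.
Qed.
HB.instance Definition _ := GRing.isLinear.Build R V 'M[R]_N *:%R jmx jmx_is_linear.

Lemma ip_jmx x y w : ip (x *m jmx y) w = ip y (br x w).
Proof. by rewrite mul_jmx ip_adjmx mul_ad. Qed.

Lemma adjmx_jmx y : adjmx (jmx y) = - jmx y.
Proof.
apply: mx_rV_eqP => x; apply: ip_nondeg => w.
by rewrite ip_adjmx mulmxN ipNl ipC !ip_jmx br_anti linearN.
Qed.

Lemma mxtrace_jmx y : \tr (jmx y) = 0.
Proof. by have := mxtrace_adjmx (jmx y); rewrite adjmx_jmx mxtraceN; lra. Qed.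

Lemma lc_nablaE x y :
  lc_nabla br G x y = 2%:R^-1 *: (br x y - x *m adjmx (ad y) - y *m adjmx (ad x)).
Proof.
rewrite /lc_nabla; congr (_ *: _); set w := (br x y - _ - _).
suff -> : \row_j (ip (br x y) (e j) - ip (br y (e j)) x + ip (br (e j) x) y) = w *m G.
  by rewrite mulmxK.
apply/rowP => j; rewrite mxE -ip_ebasis /w !ipDl !ipNl !ip_adjmx !mul_ad.
by rewrite (ipC x) (br_anti (e j) x) ipNl (ipC y).
Qed.

Definition nablaR w : 'M[R]_N := 2%:R^-1 *: (- ad w - jmx w - adjmx (ad w)).
Definition nablaL y : 'M[R]_N := 2%:R^-1 *: (ad y - adjmx (ad y) - jmx y).

Lemma mul_nablaR x w : x *m nablaR w = lc_nabla br G x w.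
Proof.
rewrite lc_nablaE -scalemxAr; congr (_ *: _).
by rewrite !mulmxDr !mulmxN mul_ad mul_jmx (br_anti w) opprK addrAC.
Qed.

Lemma mul_nablaL v y : v *m nablaL y = lc_nabla br G y v.
Proof.
rewrite lc_nablaE -scalemxAr; congr (_ *: _).
by rewrite !mulmxDr !mulmxN mul_ad mul_jmx addrAC.
Qed.

Lemma ric_mxtraceE y z : ric br G y z =
  \tr (nablaR (lc_nabla br G y z) - nablaR z *m nablaL y + ad y *m nablaR z).
Proof.
apply: eq_bigr => i _; rewrite -ebasisM /curv !mulmxDr mulmxN !mulmxA.
rewrite !mul_nablaR mul_nablaL mul_ad (br_anti _ y) -(mul_nablaR (- _)) mulNmx.
by rewrite mul_nablaR opprK.
Qed.

Lemma ricE y z : ric br G y z =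
  - \tr (ad (lc_nabla br G y z)) - 4%:R^-1 * \tr (jmx y *m jmx z)
  - 2%:R^-1 * \tr (ad y *m ad z) - 2%:R^-1 * \tr (ad y *m adjmx (ad z)).
Proof.
rewrite ric_mxtraceE /nablaR /nablaL.
set a := ad z; set b := jmx z; set c := adjmx a.
set p := ad y; set q := adjmx p; set r := jmx y; set w := ad _.
rewrite -!scalemxAl -!scalemxAr !(mulmxDl, mulmxDr, mulNmx, mulmxN).
rewrite !(mxtraceD, mxtraceN, mxtraceZ).
have adj_b : adjmx b = - b by apply: adjmx_jmx.
have adj_r : adjmx r = - r by apply: adjmx_jmx.
have tr_cq : \tr (c *m q) = \tr (p *m a) by rewrite -adjmxM mxtrace_adjmx.
have tr_aq : \tr (a *m q) = \tr (c *m p).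
  by rewrite -mxtrace_adjmx adjmxM adjmxK mxtrace_mulC.
have tr_cr : \tr (c *m r) = - \tr (a *m r).
  by rewrite -mxtrace_adjmx adjmxM adj_r /c adjmxK mulNmx mxtraceN mxtrace_mulC.
have tr_bq : \tr (b *m q) = - \tr (b *m p).
  by rewrite -mxtrace_adjmx adjmxM /q adjmxK adj_b mulmxN mxtraceN mxtrace_mulC.
rewrite mxtrace_jmx mxtrace_adjmx tr_cq tr_aq tr_cr tr_bq.
rewrite (mxtrace_mulC p a) (mxtrace_mulC p b) (mxtrace_mulC b r) (mxtrace_mulC p c).
lra.
Qed.

Lemma br0l z : br 0 z = 0.
Proof. by rewrite -mul_ad linear0 mulmx0. Qed.

Lemma br0r z : br z 0 = 0.
Proof. by rewrite -mul_ad mul0mx. Qed.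

Lemma brBr w x y : br w (x - y) = br w x - br w y.
Proof. by rewrite -!mul_ad mulmxBl. Qed.

Section Nilpotent.
Hypothesis br_nil : lie_nilpotent br.

Definition upper_central (s : nat) (x : V) : Prop :=
  forall ws : seq V, size ws = s -> iter_br br ws x = 0.

Lemma upper_central0 x : upper_central 0 x -> x = 0.
Proof. by move=> x_0; apply: (x_0 [::]). Qed.

Lemma upper_central_zero s : upper_central s 0.
Proof. by move=> ws _; elim: ws => //= w ws ->; rewrite br0r. Qed.

Lemma upper_centralS s x : upper_central s.+1 x <-> forall w, upper_central s (br w x).
Proof.
split=> [x_s1 w ws ws_s | x_s ws].
  by rewrite /iter_br -foldr_rcons; apply: x_s1; rewrite size_rcons ws_s.
case/lastP: ws => [//|ws w]; rewrite size_rcons => -[ws_s].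
by rewrite /iter_br foldr_rcons; apply: x_s.
Qed.

Lemma upper_centralB s x y :
  upper_central s x -> upper_central s y -> upper_central s (x - y).
Proof.
move=> x_s y_s ws ws_s; suff -> : iter_br br ws (x - y) = iter_br br ws x - iter_br br ws y.
  by rewrite x_s // y_s // subrr.
by elim: ws {ws_s} => //= w ws ->; rewrite brBr.
Qed.

Lemma upper_central_br s w x : upper_central s x -> upper_central s (br w x).
Proof.
elim: s w x => [|s IH] w x.
  by move/upper_central0 ->; rewrite br0r; apply: upper_central_zero.
by move/upper_centralS => x_s; apply/upper_centralS => w'; apply: IH.
Qed.

Lemma upper_central_derivation P s x :
  is_derivation br P -> upper_central s x -> upper_central s (x *m P).
Proof.
move=> P_der; elim: s x => [|s IH] x.
  by move/upper_central0 ->; rewrite mul0mx; apply: upper_central_zero.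
move/upper_centralS => x_s; apply/upper_centralS => w.
have -> : br w (x *m P) = br w x *m P - br (w *m P) x by rewrite P_der addrC addKr.
by apply: upper_centralB; [apply: IH |].
Qed.

Lemma mxtrace_lowering (M : 'M[R]_N) :
  (forall s x, upper_central s.+1 x -> upper_central s (x *m M)) -> \tr M = 0.
Proof.
move=> M_low; have [k k_nil] := br_nil.
apply: (@mxtrace_nilpotent _ _ _ k); apply: mx_rV_eqP => x; rewrite mulmx0.
suff powM j : (j <= k)%N -> upper_central (k - j) (x *m M ^+ j).
  by apply: upper_central0; have := powM k (leqnn k); rewrite subnn.
elim: j => [|j IH] jk.
  by rewrite expr0 (_ : 1 = 1%:M) // mulmx1 subn0 => ws; apply: k_nil.
rewrite exprSr (_ : M ^+ j * M = M ^+ j *m M) // mulmxA; apply: M_low.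
by rewrite -subSn // subSS; apply/IH/ltnW.
Qed.

Lemma mxtrace_ad w : \tr (ad w) = 0.
Proof.
by apply: mxtrace_lowering => s x /upper_centralS x_s; rewrite mul_ad.
Qed.

Lemma mxtrace_ad_ad y z : \tr (ad y *m ad z) = 0.
Proof.
apply: mxtrace_lowering => s x /upper_centralS x_s.
by rewrite mulmxA !mul_ad; apply: upper_central_br.
Qed.

Lemma mxtrace_derivation_ad P u : is_derivation br P -> \tr (P *m ad u) = 0.
Proof.
move=> P_der; apply: mxtrace_lowering => s x.
by move/(upper_central_derivation P_der)/upper_centralS => xP_s; rewrite mulmxA mul_ad.
Qed.

Lemma ric_nilpotentE y z : ric br G y z =
  - 4%:R^-1 * \tr (jmx y *m jmx z) - 2%:R^-1 * \tr (ad y *m adjmx (ad z)).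
Proof. by rewrite ricE mxtrace_ad mxtrace_ad_ad; lra. Qed.

Lemma mxtrace_ad_adjmx y z :
  \tr (ad y *m adjmx (ad z)) = \sum_j ip (br y (e j)) (br z (e j *m Gi)).
Proof. by rewrite mxtrace_dual; apply: eq_bigr => j _; rewrite mulmxA ip_adjmx !mul_ad. Qed.

Lemma mxtrace_jmx_jmx y z : \tr (jmx y *m jmx z) =
  \sum_i \sum_j ip y (br (e i) (e j *m Gi)) * ip z (br (e j) (e i *m Gi)).
Proof.
rewrite mxtrace_dual; apply: eq_bigr => i _; rewrite mulmxA ip_jmx mul_jmx.
have ip_br_lin : scalar (fun w => ip z (br w (e i *m Gi))).
  by move=> a u v; rewrite br_linear linearP.
rewrite (scalar_rV_expand ip_br_lin); apply: eq_bigr => j _.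
by rewrite -[_ 0 j]ip_dual ip_adjmx mul_ad mulrC.
Qed.

Lemma sum_ric_derivation P : is_derivation br P -> self_adjoint G P ->
  \sum_i ric br G (e i *m P) (e i *m Gi) = 0.
Proof.
move=> P_der P_sa.
have lin_l p q b' : scalar (fun b => ip (br p b') (br b q)).
  by move=> a u v; rewrite br_linear linearP.
have lin_r p q b : scalar (fun b' => ip (br p b') (br b q)).
  by move=> a u v; rewrite br_linear_r ipDl ipZl.
set TL := \sum_i \tr (ad (e i *m P) *m adjmx (ad (e i *m Gi))).
set TA1 := \sum_i \sum_j ip (br (e i *m P) (e j *m Gi)) (br (e j) (e i *m Gi)).
set TA2 := \sum_i \sum_j ip (br (e i) (e j *m Gi *m P)) (br (e j) (e i *m Gi)).
(* The derivation rule splits the j-term into TA1 + TA2, and both sums equal - TL. *)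
have TA_split : \sum_i \tr (jmx (e i *m P) *m jmx (e i *m Gi)) = TA1 + TA2.
  under eq_bigr do rewrite mxtrace_jmx_jmx.
  rewrite exchange_big /=; under eq_bigr do rewrite exchange_big /=.
  rewrite /TA1 /TA2 -big_split /=; apply: eq_bigr => i _.
  rewrite -big_split /=; apply: eq_bigr => j _.
  under eq_bigr do rewrite P_sa.
  by rewrite sum_ip_dual P_der ipDl.
have TA1E : TA1 = - TL.
  rewrite /TA1 /TL -sumrN; apply: eq_bigr => i _; rewrite mxtrace_ad_adjmx -sumrN.
  rewrite (sum_dual_swap (lin_l _ _) (lin_r _ _)); apply: eq_bigr => j _.
  by rewrite (br_anti (e j *m Gi)) linearN.
have TA2E : TA2 = TA1.
  transitivity (\sum_i \sum_j ip (br (e i) (e j *m Gi)) (br (e j *m P) (e i *m Gi))).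
    apply: eq_bigr => i _; rewrite -[in LHS](adjmx_self_adjoint P_sa).
    by rewrite -(sum_dual_adjmx (lin_l _ _) (lin_r _ _)).
  by rewrite exchange_big; apply: eq_bigr => i _; apply: eq_bigr => j _; apply: ipC.
under eq_bigr do rewrite ric_nilpotentE.
by rewrite sumrB -!mulr_sumr TA_split TA2E TA1E -/TL; lra.
Qed.

Section Einstein.
Variable lam : R.
Hypothesis ric_lam : ricci_op br G = lam%:M.

Lemma ric_einstein y z : ric br G y z = lam * ip y z.
Proof.
have ric_lin_l w : scalar (ric br G ^~ w).
  move=> a u v; rewrite !ric_nilpotentE !linearP /= !mulmxDl -!scalemxAl.
  by rewrite !mxtraceD !mxtraceZ; ring.
have ric_lin_r w : scalar (ric br G w).
  by move=> a u v; rewrite !ric_nilpotentE !linearP /=; ring.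
have form_ric : form_mx (ric br G) = lam *: G.
  by rewrite -mul_scalar_mx -ric_lam /ricci_op mulmxKV.
by rewrite bilinear_formE // form_ric -scalemxAr -scalemxAl mxE.
Qed.

Lemma mxtrace_derivation_einstein P :
  lam != 0 -> is_derivation br P -> self_adjoint G P -> \tr P = 0.
Proof.
move=> lam_neq0 P_der P_sa.
have : lam * \tr P = 0.
  rewrite (mxtrace_dual P) mulr_sumr -[RHS](sum_ric_derivation P_der P_sa).
  by apply: eq_bigr => i _; rewrite ric_einstein.
by move/eqP; rewrite mulf_eq0 (negPf lam_neq0) => /eqP.
Qed.

End Einstein.
End Nilpotent.
End LieBracket.
End NonDegenerate.
End Metric.

Section SemidirectProduct.
Variables (R : realType) (n : nat) (br : 'rV[R]_n -> 'rV[R]_n -> 'rV[R]_n).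
Variables (G : 'M[R]_n) (lam : R) (P : 'M[R]_n).
Hypotheses (br_linear : forall z, linear (br^~ z)) (br_anti : forall x y, br x y = - br y x).
Hypotheses (G_sym : G^T = G) (G_unit : G \in unitmx).
Hypotheses (lam_neq0 : lam != 0) (trPP_neq0 : \tr (P *m P) != 0).

Local Notation sbr := (sd_br br P).
Local Notation Gt := (sd_metric G lam P).
Local Notation c0 := (- (lam^-1 * \tr (P *m P))).
Local Notation x0 v := (rsubmx v 0 0).

Lemma c0_neq0 : c0 != 0.
Proof. by rewrite oppr_eq0 mulf_eq0 invr_eq0 negb_or lam_neq0. Qed.

Lemma sd_br_linear z : linear (sbr^~ z).
Proof.
move=> a x y; rewrite /sd_br scale_row_mx add_row_mx scaler0 addr0; congr row_mx.
rewrite linearP /= br_linear mulmxDl -scalemxAl.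
by apply/rowP => j; rewrite !mxE; ring.
Qed.

Lemma sd_br_anti x y : sbr x y = - sbr y x.
Proof.
rewrite /sd_br opp_row_mx oppr0 (br_anti (lsubmx x)); congr row_mx.
by apply/rowP => j; rewrite !mxE; ring.
Qed.

Lemma sd_metric_mulV : Gt *m block_mx (invmx G) 0 0 (c0^-1)%:M = 1%:M.
Proof.
rewrite /sd_metric mulmx_block !mulmx0 !mul0mx !addr0 !add0r mulmxV //.
by rewrite -scalar_mxM mulfV ?c0_neq0 // -scalar_mx_block.
Qed.

Lemma sd_metric_unit : Gt \in unitmx.
Proof. by case: (mulmx1_unit sd_metric_mulV). Qed.

Lemma invmx_sd_metric : invmx Gt = block_mx (invmx G) 0 0 (c0^-1)%:M.
Proof. by rewrite -[LHS]mulmx1 -sd_metric_mulV mulmxA mulVmx ?sd_metric_unit // mul1mx. Qed.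

Lemma sd_metric_sym : Gt^T = Gt.
Proof. by rewrite /sd_metric tr_block_mx !trmx0 tr_scalar_mx G_sym. Qed.

Lemma ip_sd y z : ip Gt y z = ip G (lsubmx y) (lsubmx z) + c0 * x0 y * x0 z.
Proof.
rewrite {1}/Defs.ip /sd_metric -{1}[y]hsubmxK -{1}[z]hsubmxK.
rewrite mul_row_block tr_row_mx mul_row_col !mulmx0 addr0 add0r.
by rewrite mul_mx_scalar mx11_mul trmx11 mxE; congr (_ + _); rewrite !mxE.
Qed.

Lemma ad_sd v : ad sbr v =
  block_mx (ad br (lsubmx v) + x0 v *: P) 0 (- (lsubmx v *m P)) 0.
Proof.
apply: mx_rV_eqP => x.
rewrite (mul_ad sd_br_linear sd_br_anti) -[x]hsubmxK mul_row_block.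
rewrite /sd_br !row_mxKl !row_mxKr !mulmx0 addr0; congr row_mx.
rewrite mulmxDr (mul_ad br_linear br_anti) -scalemxAr mx11_mul scalerN.
by apply/rowP => j; rewrite !mxE; ring.
Qed.

Lemma adjmx_sd (A : 'M[R]_n) (B : 'M[R]_(n, 1)) (C : 'M[R]_(1, n)) (D : 'M[R]_1) :
  adjmx Gt (block_mx A B C D) =
  block_mx (adjmx G A) (c0^-1 *: (G *m C^T)) (c0 *: (B^T *m invmx G)) D^T.
Proof.
rewrite /adjmx invmx_sd_metric /sd_metric tr_block_mx !mulmx_block.
rewrite !mulmx0 !mul0mx !addr0 !add0r; congr block_mx.
- by rewrite mul_mx_scalar.
- by rewrite mul_scalar_mx -scalemxAl.
- by rewrite mul_scalar_mx mul_mx_scalar scalerA mulVf ?c0_neq0 // scale1r.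
Qed.

Section Nilpotent.
Hypotheses (P_der : is_derivation br P) (P_sa : self_adjoint G P).
Hypotheses (br_nil : lie_nilpotent br) (ric_lam : ricci_op br G = lam%:M).

Lemma jmx_sd v : jmx Gt sbr v =
  block_mx (jmx G br (lsubmx v)) (- c0^-1 *: (G *m (lsubmx v *m P)^T)) (lsubmx v *m P) 0.
Proof.
have ip_swap (u a : 'rV[R]_n) : u *m G *m (a *m P)^T = a *m G *m (u *m P)^T.
  rewrite (mx11_scalar (u *m _ *m _)) (mx11_scalar (a *m _ *m _)); congr _%:M.
  by rewrite -[LHS]/(ip G u (a *m P)) -P_sa ipC.
have adjP : adjmx G P = P by apply: adjmx_self_adjoint.
apply: mx_rV_eqP => x; rewrite (mul_jmx _ sd_br_linear) ad_sd adjmx_sd.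
rewrite -[v in v *m _]hsubmxK -[x in _ = x *m _]hsubmxK !mul_row_block.
rewrite !trmx0 !mul0mx !scaler0 !mulmx0 !addr0; congr row_mx.
  rewrite linearD linearZ /= adjP mulmxDr -scalemxAr.
  by rewrite -(mul_jmx _ br_linear) mx11_mul.
rewrite -!scalemxAr linearN /= !mulmxN scalerN scaleNr; congr (- (_ *: _)).
by rewrite !mulmxA ip_swap.
Qed.

Lemma mxtrace_ad_sd v : \tr (ad sbr v) = 0.
Proof.
rewrite ad_sd mxtrace_block mxtraceD mxtraceZ (mxtrace_ad br_linear br_anti br_nil).
rewrite (mxtrace_derivation_einstein G_sym G_unit br_linear br_anti br_nil ric_lam) //.
by rewrite mxtrace0 mulr0 !addr0.
Qed.

Lemma mxtrace_ad_ad_sd y z : \tr (ad sbr y *m ad sbr z) = x0 y * x0 z * \tr (P *m P).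
Proof.
rewrite !ad_sd mulmx_block mxtrace_block !mulmx0 !mul0mx !addr0 mxtrace0 addr0.
rewrite !(mulmxDl, mulmxDr) -!scalemxAl -!scalemxAr !mxtraceD !mxtraceZ.
rewrite (mxtrace_ad_ad br_linear br_anti br_nil) (mxtrace_mulC (ad br _) P).
by rewrite !(mxtrace_derivation_ad br_linear br_anti br_nil) //; ring.
Qed.

Lemma mxtrace_ad_adjmx_sd y z : \tr (ad sbr y *m adjmx Gt (ad sbr z)) =
  \tr (ad br (lsubmx y) *m adjmx G (ad br (lsubmx z)))
  + x0 y * x0 z * \tr (P *m P) + c0^-1 * ip G (lsubmx y *m P) (lsubmx z *m P).
Proof.
rewrite (ad_sd z) adjmx_sd (ad_sd y) mulmx_block mxtrace_block.
have adjP : adjmx G P = P by apply: adjmx_self_adjoint.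
have trPad u : \tr (P *m ad br u) = 0 by apply: (mxtrace_derivation_ad br_linear br_anti br_nil).
have trPadj : \tr (P *m adjmx G (ad br (lsubmx z))) = 0.
  by rewrite -{1}adjP -adjmxM // mxtrace_adjmx // mxtrace_mulC trPad.
rewrite !mul0mx !addr0 linearD linearZ /= adjP.
rewrite !(mulmxDl, mulmxDr) -!scalemxAl -!scalemxAr !mxtraceD !mxtraceZ.
rewrite trPadj (mxtrace_mulC (ad br _) P) trPad mxtrace11.
rewrite linearN /= mulNmx !mulmxN opprK /Defs.ip !mulmxA.
ring.
Qed.

Lemma mxtrace_jmx_jmx_sd y z : \tr (jmx Gt sbr y *m jmx Gt sbr z) =
  \tr (jmx G br (lsubmx y) *m jmx G br (lsubmx z))
  - c0^-1 * (ip G (lsubmx z *m P) (lsubmx y *m P) + ip G (lsubmx y *m P) (lsubmx z *m P)).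
Proof.
rewrite !jmx_sd mulmx_block mxtrace_block mulmx0 addr0 mxtraceD.
rewrite [\tr (_ *: _ *m _)]mxtrace_mulC !mxtrace11 -!scalemxAr !mulmxA.
have scale11 (a : R) (M : 'M[R]_1) : (a *: M) 0 0 = a * M 0 0 by rewrite mxE.
by rewrite !scale11 mulrDr opprD addrA !mulNr.
Qed.

Lemma ric_sd y z : ric sbr Gt y z = lam * ip Gt y z.
Proof.
have ric_g := ric_einstein G_sym G_unit br_linear br_anti br_nil ric_lam (lsubmx y) (lsubmx z).
rewrite (ric_nilpotentE G_sym G_unit br_linear br_anti br_nil) in ric_g.
rewrite (ricE sd_metric_sym sd_metric_unit sd_br_linear sd_br_anti) mxtrace_ad_sd.
rewrite mxtrace_jmx_jmx_sd mxtrace_ad_ad_sd mxtrace_ad_adjmx_sd ip_sd.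
have lam_c0 : lam * c0 = - \tr (P *m P) by rewrite mulrN mulrA mulfV // mul1r.
rewrite (ipC G_sym (lsubmx z *m P)) [RHS]mulrDr -ric_g !mulrA lam_c0.
move: (\tr (jmx G br _ *m _)) (\tr (ad br _ *m _)) (ip G _ _) (\tr (P *m P))
      (x0 y) (x0 z) (c0^-1).
by move=> A B q T r s c0_inv; field.
Qed.

Lemma ricci_op_sd : ricci_op sbr Gt = lam%:M.
Proof.
rewrite /ricci_op -[lam%:M](mulmxK sd_metric_unit); congr (_ *m _).
apply/matrixP => i j; rewrite [LHS]mxE ric_sd mul_scalar_mx [RHS]mxE.
by rewrite ip_ebasis ebasisM.
Qed.

End Nilpotent.

Lemma sub_sd_g (x : 'rV[R]_(n + 1)) : (x <= sd_g R n)%MS <-> rsubmx x = 0.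
Proof.
split; first by case/submxP => D ->; rewrite /sd_g mul_mx_row mulmx0 row_mxKr.
move=> x_g; rewrite -[x]hsubmxK x_g.
have -> : row_mx (lsubmx x) 0 = lsubmx x *m sd_g R n by rewrite /sd_g mul_mx_row mulmx1 mulmx0.
exact: submxMl.
Qed.

Lemma sub_sd_a (x : 'rV[R]_(n + 1)) : (x <= sd_a R n)%MS <-> lsubmx x = 0.
Proof.
split; first by case/submxP => D ->; rewrite /sd_a mul_mx_row mulmx0 row_mxKl.
move=> x_a; rewrite -[x]hsubmxK x_a.
have -> : row_mx 0 (rsubmx x) = rsubmx x *m sd_a R n by rewrite /sd_a mul_mx_row mulmx1 mulmx0.
exact: submxMl.
Qed.

Lemma sd_g_a_direct :
  (sd_g R n + sd_a R n == (1%:M : 'M[R]_(n + 1)))%MS &&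
  (sd_g R n :&: sd_a R n == (0 : 'M[R]_(n + 1)))%MS.
Proof.
apply/andP; split.
  rewrite submx1 /=; apply/row_subP => i; set r := row i _.
  have -> : r = row_mx (lsubmx r) 0 + row_mx 0 (rsubmx r).
    by rewrite add_row_mx addr0 add0r hsubmxK.
  by apply: addmx_sub_adds; [apply/sub_sd_g; rewrite row_mxKr | apply/sub_sd_a; rewrite row_mxKl].
rewrite sub0mx andbT; apply/row_subP => i; set r := row i _.
have r_g : (r <= sd_g R n)%MS := submx_trans (row_sub i _) (capmxSl _ _).
have r_a : (r <= sd_a R n)%MS := submx_trans (row_sub i _) (capmxSr _ _).
by rewrite -[r]hsubmxK (sub_sd_g _).1 // (sub_sd_a _).1 // row_mx0 sub0mx.
Qed.

Lemma rsubmx_sd_br x y : rsubmx (sbr x y) = 0.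
Proof. by rewrite /sd_br row_mxKr. Qed.

Lemma sd_g_a_orthogonal u v : (u <= sd_g R n)%MS -> (v <= sd_a R n)%MS -> ip Gt u v = 0.
Proof.
move=> /sub_sd_g u_g /sub_sd_a v_a.
by rewrite ip_sd u_g v_a linear0 mxE mulr0 mul0r addr0.
Qed.

Lemma sd_g_ideal x y : (x <= sd_g R n)%MS -> (sbr y x <= sd_g R n)%MS.
Proof. by move=> _; apply/sub_sd_g/rsubmx_sd_br. Qed.

Lemma iter_sd_br (xs : seq 'rV[R]_(n + 1)) y :
  all (fun x => x <= sd_g R n)%MS xs -> (y <= sd_g R n)%MS ->
  iter_br sbr xs y = row_mx (iter_br br (map lsubmx xs) (lsubmx y)) 0.
Proof.
move=> xs_g /sub_sd_g y_g; elim: xs xs_g => [_ | x xs IH] /=.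
  by rewrite -{1}[y]hsubmxK y_g.
case/andP => /sub_sd_g x_g /IH ->; rewrite /sd_br row_mxKl row_mxKr x_g mxE.
by rewrite !scale0r subr0 addr0.
Qed.

Lemma sd_g_nilpotent : lie_nilpotent br ->
  exists k, forall (xs : seq 'rV[R]_(n + 1)) y,
    all (fun x => x <= sd_g R n)%MS xs -> (y <= sd_g R n)%MS ->
    size xs = k -> iter_br sbr xs y = 0.
Proof.
case=> k k_nil; exists k => xs y xs_g y_g xs_k.
by rewrite iter_sd_br // k_nil ?size_map // row_mx0.
Qed.

Lemma sd_a_abelian x y : (x <= sd_a R n)%MS -> (y <= sd_a R n)%MS -> sbr x y = 0.
Proof.
move=> /sub_sd_a x_a /sub_sd_a y_a.
by rewrite /sd_br x_a y_a (br0l br_linear br_anti) mul0mx !scaler0 subr0 addr0 row_mx0.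
Qed.

Lemma sd_a_ad_self_adjoint x : self_adjoint G P -> (x <= sd_a R n)%MS ->
  forall u v, ip Gt (sbr x u) v = ip Gt u (sbr x v).
Proof.
move=> P_sa /sub_sd_a x_a u v; rewrite !ip_sd !rsubmx_sd_br mxE !mulr0 !addr0.
rewrite /sd_br !row_mxKl x_a !(br0l br_linear br_anti) mul0mx scaler0 subr0 !add0r.
by rewrite mul0r addr0 scaler0 subr0 ipZl // linearZ /= P_sa.
Qed.

End SemidirectProduct.

Theorem corollary4p12 (R : realType) (n : nat)
    (br : 'rV[R]_n -> 'rV[R]_n -> 'rV[R]_n) (G : 'M[R]_n) (lambda : R)
    (P : 'M[R]_n) :
  is_lie br -> lie_nilpotent br ->
  is_metric G -> ricci_op br G = lambda%:M -> lambda != 0 ->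
  is_derivation br P -> self_adjoint G P -> \tr (P *m P) != 0 ->
  [/\ is_metric (sd_metric G lambda P),
      ricci_op (sd_br br P) (sd_metric G lambda P) = lambda%:M &
      pseudo_iwasawa (sd_br br P) (sd_metric G lambda P) (sd_g R n) (sd_a R n)].
Proof.
move=> [br_lin br_anti _] br_nil [G_sym G_unit] ric_lam lam_neq0 P_der P_sa trPP_neq0.
have br_linear z : linear (br^~ z) by move=> a x y; apply: br_lin.
split.
- by split; [apply: sd_metric_sym | apply: sd_metric_unit].
- exact: ricci_op_sd.
- split; first exact: sd_g_a_direct.
  + split; [exact: sd_g_a_orthogonal | split; [exact: sd_g_ideal | exact: sd_g_nilpotent]].
  + exact: sd_a_abelian.
  + by move=> x; apply: sd_a_ad_self_adjoint.
Qed.
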